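(* Consider the discrete-time system $x(t+1) = A x(t) + B u(t) + C v(t) + w$ with $A \in \mathbb{R}^{d_x\times d_x}$, $B\in\mathbb{R}^{d_x\times d_u}$, $C \in\mathbb{R}^{d_x\times d_v}$, constant $w\in\mathbb{R}^{d_x}$, and disturbance $v(s) \in \mathcal V = \langle c_{\mathcal V}\mid G_{\mathcal V}\rangle$ with $G_{\mathcal V}\in\mathbb{R}^{d_v\times n_{\mathcal V}}$. Let $G_{\mathcal I} \in \mathbb{R}^{d_x\times n_{\mathcal I}}$, $\alpha \in \mathbb{R}^{d_x}$, $\gamma\in\mathbb{R}^{n_{\mathcal I}}$ with $\gamma \geq 0$, $\Gamma = \mathrm{diag}(\gamma)$, $\mathcal I = \langle \alpha \mid G_{\mathcal I}\Gamma\rangle$. For $s = 0,\ldots,t-1$ let $\beta(s)\in\mathbb{R}^{d_u}$, $\Phi(s)\in\mathbb{R}^{d_u\times n_{\mathcal I}}$, $G_{\mathcal F(s)}\in\mathbb{R}^{d_u\times m_s}$, $\psi(s)\in\mathbb{R}^{m_s}$ with $\psi(s)\geq 0$, $\Psi(s) = \mathrm{diag}(\psi(s))$. Define the reach set $\mathcal R_t(\mathcal I)$ as the set of states $x(t)$ obtained from $x(0) = \alpha + G_{\mathcal I}\Gamma\lambda$, inputs $u(s) = \beta(s) + \Phi(s)\lambda + G_{\mathcal F(s)}\Psi(s)\rho(s)$ and disturbances $v(s) \in\mathcal V$, $s = 0,\ldots,t-1$, as $\lambda$ ranges over $[-1,1]^{n_{\mathcal I}}$, each $\rho(s)$ over $[-1,1]^{m_s}$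 and each $v(s)$ over $\mathcal V$. Then $\mathcal R_t(\mathcal I)$ is the zonotope with $n_{\mathcal I} + \sum_{s=0}^{t-1}m_s + t\,n_{\mathcal V}$ generators, center \[ A^t\alpha + \sum_{s=0}^{t-1}A^{t-1-s}\big(B\beta(s) + Cc_{\mathcal V} + w\big), \] and generator matrix \[ \big[\,F_{\mathcal I}\ \ F_0\ \ F_1\ \cdots\ F_{t-1}\ \ A^{t-1}CG_{\mathcal V}\ \ A^{t-2}CG_{\mathcal V}\ \cdots\ CG_{\mathcal V}\,\big], \] where $F_{\mathcal I} = A^tG_{\mathcal I}\Gamma + \sum_{s=0}^{t-1}A^{t-1-s}B\Phi(s)$ and $F_s = A^{t-1-s}BG_{\mathcal F(s)}\Psi(s)$ for $s = 0,\ldots,t-1$.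
   Context: The notation $\langle c \mid G\rangle$ denotes the zonotope $\{c + G\lambda : \lambda \in [-1,1]^n\}$ with center $c$ and generator matrix $G$. $\mathrm{diag}(\gamma)$ is the diagonal matrix with $\gamma$ on its diagonal; $[M_1\ M_2\ \cdots]$ denotes horizontal concatenation. *)

From HB Require Import structures.
From mathcomp Require Import all_boot all_order all_algebra.
Set Implicit Arguments. Unset Strict Implicit. Unset Printing Implicit Defensive.
Import Order.TTheory GRing.Theory Num.Theory.
Local Open Scope ring_scope.

Definition in_box (R : realFieldType) (n : nat) (lam : 'cV[R]_n) : Prop :=
  forall i : 'I_n, -1 <= lam i 0 <= 1.

Definition in_zonotope (R : realFieldType) (d n : nat)
  (c : 'cV[R]_d) (G : 'M[R]_(d, n)) (x : 'cV[R]_d) : Prop :=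
  exists lam : 'cV[R]_n, in_box lam /\ x = c + G *m lam.

Fixpoint traj (R : realFieldType) (dx du dv : nat)
  (A : 'M[R]_dx) (B : 'M[R]_(dx, du)) (C : 'M[R]_(dx, dv)) (w : 'cV[R]_dx)
  (x0 : 'cV[R]_dx) (u : nat -> 'cV[R]_du) (v : nat -> 'cV[R]_dv) (k : nat)
  : 'cV[R]_dx :=
  match k with
  | 0 => x0
  | k'.+1 => A *m traj A B C w x0 u v k' + B *m u k' + C *m v k' + w
  end.

Definition in_reach_set (R : realFieldType) (dx du dv nV nI t : nat)
  (m : nat -> nat)
  (A : 'M[R]_dx) (B : 'M[R]_(dx, du)) (C : 'M[R]_(dx, dv)) (w : 'cV[R]_dx)
  (cV : 'cV[R]_dv) (GV : 'M[R]_(dv, nV))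
  (alpha : 'cV[R]_dx) (GI : 'M[R]_(dx, nI)) (gamma : 'cV[R]_nI)
  (beta : nat -> 'cV[R]_du) (Phi : nat -> 'M[R]_(du, nI))
  (GF : forall s, 'M[R]_(du, m s)) (psi : forall s, 'cV[R]_(m s))
  (x : 'cV[R]_dx) : Prop :=
  exists (lam : 'cV[R]_nI) (rho : forall s, 'cV[R]_(m s)) (v : nat -> 'cV[R]_dv),
    in_box lam /\
    (forall s, (s < t)%N -> in_box (rho s)) /\
    (forall s, (s < t)%N -> in_zonotope cV GV (v s)) /\
    x = traj A B C w (alpha + GI *m diag_mx gamma^T *m lam)
          (fun s => beta s + Phi s *m lam + GF s *m diag_mx (psi s)^T *m rho s)
          v t.

From HB Require Import structures.
From mathcomp Require Import all_boot all_order all_algebra.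
Import Order.TTheory GRing.Theory Num.Theory.
Local Open Scope ring_scope.

(* Unrolling the recursion gives x(t) = A^t x(0) + sum_s A^(t-1-s) (B u(s) + C v(s) + w),
   which is affine in the initial state, the inputs and the disturbances. All of them
   are affine in the box parameters lambda, rho(s) and the parameters mu(s) of
   v(s) = c_V + G_V mu(s), so x(t) is the center plus the block-row generator matrix
   applied to the stacked parameter vector. Stacking and splitting parameter vectors
   are mutually inverse and respect the box, so the reach set is exactly that zonotope. *)

Lemma traj_sum (R : realFieldType) (dx du dv : nat)
    (A : 'M[R]_dx) (B : 'M[R]_(dx, du)) (C : 'M[R]_(dx, dv)) (w : 'cV[R]_dx)
    (x0 : 'cV[R]_dx) (u : nat -> 'cV[R]_du) (v : nat -> 'cV[R]_dv) (t : nat) :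
  traj A B C w x0 u v t =
  A ^+ t *m x0 + \sum_(s < t) A ^+ (t.-1 - s) *m (B *m u s + C *m v s + w).
Proof.
have mulA_exp k : A *m A ^+ k = A ^+ k.+1 by rewrite exprS.
elim: t => [|t IHt] /=; first by rewrite big_ord0 expr0 mul1mx addr0.
rewrite IHt big_ord_recr /= subnn expr0 mul1mx mulmxDr mulmxA mulA_exp mulmx_sumr.
rewrite -!addrA; congr (_ + _); rewrite !addrA; congr (_ + _ + _ + _).
apply: eq_bigr => -[s lt_st] _ /=; rewrite mulmxA mulA_exp.
by case: t lt_st {IHt} => // t lt_st; rewrite /= subSn.
Qed.

Section Box.

Variable R : realFieldType.

Lemma in_box_col_mxP n1 n2 (a : 'cV[R]_n1) (b : 'cV[R]_n2) :
  in_box (col_mx a b) <-> in_box a /\ in_box b.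
Proof.
split=> [ab_box | [a_box b_box] k].
  by split=> k; [have := ab_box (lshift n2 k) | have := ab_box (rshift n1 k)];
     rewrite ?col_mxEu ?col_mxEd.
by rewrite -(splitK k); case: (split k) => j /=; rewrite ?col_mxEu ?col_mxEd.
Qed.

Lemma in_box_mxcolP t (p_ : 'I_t -> nat) (f : forall i, 'cV[R]_(p_ i)) :
  in_box (\mxcol_i f i) <-> forall i, in_box (f i).
Proof.
split=> [f_box i k | f_box k]; last by rewrite mxE; apply: f_box.
by rewrite -(mxcolK f i) mxE; apply: f_box.
Qed.

End Box.

Definition extend_ord {T : nat -> Type} {t : nat} (d : forall s, T s)
    (f : forall i : 'I_t, T i) (s : nat) : T s :=
  (if (s < t)%N as b return (s < t)%N = b -> T s
   then fun lt_st => f (Ordinal lt_st) else fun _ => d s) (erefl _).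

Lemma extend_ordE {T : nat -> Type} {t : nat} (d : forall s, T s)
    (f : forall i : 'I_t, T i) (i : 'I_t) :
  extend_ord d f i = f i.
Proof.
case: i => s lt_st; rewrite /extend_ord /=.
suff extend_eq b (e : (s < t)%N = b) :
  (if b as b0 return (s < t)%N = b0 -> T s
   then fun h => f (Ordinal h) else fun _ => d s) e = f (Ordinal lt_st).
  exact: extend_eq.
by case: b e => [e | e]; [rewrite (bool_irrelevance e lt_st) | rewrite lt_st in e].
Qed.

Section ReachSet.

Variables (R : realFieldType) (dx du dv nV nI t : nat) (m : nat -> nat).
Variables (A : 'M[R]_dx) (B : 'M[R]_(dx, du)) (C : 'M[R]_(dx, dv)) (w : 'cV[R]_dx).
Variables (cV : 'cV[R]_dv) (GV : 'M[R]_(dv, nV)).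
Variables (alpha : 'cV[R]_dx) (GI : 'M[R]_(dx, nI)) (gamma : 'cV[R]_nI).
Variables (beta : nat -> 'cV[R]_du) (Phi : nat -> 'M[R]_(du, nI)).
Variables (GF : forall s, 'M[R]_(du, m s)) (psi : forall s, 'cV[R]_(m s)).

Definition reach_init (lam : 'cV[R]_nI) : 'cV[R]_dx :=
  alpha + GI *m diag_mx gamma^T *m lam.

Definition reach_input (lam : 'cV[R]_nI) (rho : forall s, 'cV[R]_(m s)) (s : nat) :
    'cV[R]_du :=
  beta s + Phi s *m lam + GF s *m diag_mx (psi s)^T *m rho s.

Definition reach_center : 'cV[R]_dx :=
  A ^+ t *m alpha + \sum_(s < t) A ^+ (t.-1 - s) *m (B *m beta s + C *m cV + w).

Definition reach_gen : 'M[R]_(dx, nI + ((\sum_(s < t) m s) + (\sum_(j < t) nV))) :=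
  row_mx (A ^+ t *m GI *m diag_mx gamma^T + \sum_(s < t) A ^+ (t.-1 - s) *m B *m Phi s)
    (row_mx (\mxrow_(s < t) (A ^+ (t.-1 - s) *m B *m GF s *m diag_mx (psi s)^T))
            (\mxrow_(j < t) (A ^+ (t.-1 - j) *m C *m GV))).

Lemma traj_reach_inputs lam rho (mu : 'I_t -> 'cV[R]_nV) (v : nat -> 'cV[R]_dv) :
    (forall i : 'I_t, v i = cV + GV *m mu i) ->
  traj A B C w (reach_init lam) (reach_input lam rho) v t =
  reach_center + reach_gen *m col_mx lam (col_mx (\mxcol_s rho s) (\mxcol_j mu j)).
Proof.
move=> vE; rewrite /reach_init /reach_input /reach_center /reach_gen traj_sum.
rewrite !mul_row_col !mul_mxrow_mxcol mulmxDl mulmx_suml [A ^+ t *m (_ + _)]mulmxDr.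
rewrite !mulmxA -!addrA; congr (_ + _); rewrite [RHS]addrCA; congr (_ + _).
rewrite -!big_split; apply: eq_bigr => i _ /=.
by rewrite vE !mulmxDr !mulmxA [LHS](AC ((3*2)*1) ((1*4*6)*(2*(3*5)))).
Qed.
Lemma reach_sub_zonotope x :
  in_reach_set t A B C w cV GV alpha GI gamma beta Phi GF psi x ->
  in_zonotope reach_center reach_gen x.
Proof.
case=> lam [rho [v [lam_box [rho_box [v_zon ->]]]]].
have /fin_all_exists[mu mu_spec] :
    forall i : 'I_t, exists mu, in_box mu /\ v i = cV + GV *m mu.
  by move=> i; apply: v_zon (ltn_ord i).
exists (col_mx lam (col_mx (\mxcol_s rho s) (\mxcol_j mu j))); split.
  apply/in_box_col_mxP; split=> //; apply/in_box_col_mxP.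
  by split; apply/in_box_mxcolP => i; [apply: rho_box (ltn_ord i) | case: (mu_spec i)].
by apply: traj_reach_inputs => i; case: (mu_spec i).
Qed.

Lemma zonotope_sub_reach lam' :
  in_box lam' ->
  in_reach_set t A B C w cV GV alpha GI gamma beta Phi GF psi
    (reach_center + reach_gen *m lam').
Proof.
pose mu j := submxcol (dsubmx (dsubmx lam')) j : 'cV[R]_nV.
pose rho := extend_ord (fun s => 0 : 'cV[R]_(m s))
  (fun i => submxcol (usubmx (dsubmx lam')) i).
pose v := extend_ord (fun => cV) (fun j => cV + GV *m mu j).
have vE (j : 'I_t) : v j = cV + GV *m mu j := extend_ordE _ _ j.
have lam'E : lam' = col_mx (usubmx lam') (col_mx (\mxcol_s rho s) (\mxcol_j mu j)).
  by rewrite (eq_mxcol (fun i => extend_ordE _ _ i)) !submxcolK !vsubmxK.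
rewrite {1}lam'E => /in_box_col_mxP[lam_box].
move=> /in_box_col_mxP[/in_box_mxcolP rho_box /in_box_mxcolP mu_box].
exists (usubmx lam'), rho, v; split=> //; split.
  by move=> s lt_st; apply: (rho_box (Ordinal lt_st)).
split; first by move=> s lt_st; exists (mu (Ordinal lt_st)); rewrite -vE.
by rewrite {1}lam'E -(traj_reach_inputs _ rho mu v vE).
Qed.

End ReachSet.

Theorem proposition6p1 (R : realFieldType) (dx du dv nV nI t : nat)
  (m : nat -> nat)
  (A : 'M[R]_dx) (B : 'M[R]_(dx, du)) (C : 'M[R]_(dx, dv)) (w : 'cV[R]_dx)
  (cV : 'cV[R]_dv) (GV : 'M[R]_(dv, nV))
  (alpha : 'cV[R]_dx) (GI : 'M[R]_(dx, nI)) (gamma : 'cV[R]_nI)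
  (beta : nat -> 'cV[R]_du) (Phi : nat -> 'M[R]_(du, nI))
  (GF : forall s, 'M[R]_(du, m s)) (psi : forall s, 'cV[R]_(m s))
  (hgamma : forall i, 0 <= gamma i 0)
  (hpsi : forall s, (s < t)%N -> forall i, 0 <= psi s i 0) :
  let center : 'cV[R]_dx :=
    A ^+ t *m alpha
    + \sum_(s < t) A ^+ (t.-1 - s) *m (B *m beta s + C *m cV + w) in
  let FI : 'M[R]_(dx, nI) :=
    A ^+ t *m GI *m diag_mx gamma^T
    + \sum_(s < t) A ^+ (t.-1 - s) *m B *m Phi s in
  let G : 'M[R]_(dx, nI + ((\sum_(s < t) m s) + (\sum_(j < t) nV))) :=
    row_mx FI
      (row_mx (\mxrow_(s < t) (A ^+ (t.-1 - s) *m B *m GF s *m diag_mx (psi s)^T))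
              (\mxrow_(j < t) (A ^+ (t.-1 - j) *m C *m GV))) in
  forall x : 'cV[R]_dx,
    in_reach_set t A B C w cV GV alpha GI gamma beta Phi GF psi x
    <-> in_zonotope center G x.
Proof.
move=> center FI G x; split; first exact: reach_sub_zonotope.
by case=> lam [lam_box ->]; exact: zonotope_sub_reach.
Qed.
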